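(* For all integers $q\ge3$ and $n\ge3$ there exists a pyramid $PY_q^n$ in at least one of the spaces of constant curvature $\mathbb{S}^3$, $\mathbb{R}^3$, $\mathbb{H}^3$ (not necessarily in all of these spaces, and not necessarily of all sizes).
   Context: A generalized pyramid is a polyhedron with a distinguished $q$-gonal face, called the base, and $q$ possibly infinite triangles, called sides, that are adjacent in pairs and to the base (so the apex may be ideal or hyperideal in $\mathbb{H}^3$). $PY_q^n$ denotes a generalized pyramid such that the base is a regular $q$-gon, the pyramid is invariant under the rotation of angle $2\pi/q$ about the axis through the center of and perpendicular to the base, and the dihedral angle between adjacent sides is $2\pi/n$. *)

From Stdlib Require Import Reals Lra Lia.
Open Scope R_scope.

(** Points are represented in an affine chart R^3, viewed as the points
    (x,1) of R^4 equipped with the bilinear form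
        B_k((x,t),(y,s)) = x.y + k*t*s,   k = +1, 0, -1.
    - Spherical  (k = +1): gnomonic chart of the open hemisphere of S^3
      {X in R^4 : |X| = 1, X_4 > 0}; every point of R^3 is a point of S^3.
    - Euclidean  (k =  0): R^3 itself.
    - Hyperbolic (k = -1): Beltrami-Klein model; the points of H^3 are those
      of the open unit ball; points on the unit sphere are ideal, points
      outside are hyperideal.
    In each case a plane {x | n.x = d} has (outward, for the half-space
    n.x <= d) normal vector (n, -d) in R^4, and the interior dihedral angle
    between two half-spaces with outward normals N1, N2 is
        acos ( - B(N1,N2) / sqrt (B(N1,N1) B(N2,N2)) ). *)

Inductive geom : Type := Spherical | Euclidean | Hyperbolic.

Definition curv (g : geom) : R :=
  match g with Spherical => 1 | Euclidean => 0 | Hyperbolic => -1 end.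

Definition pt : Type := (R * R * R)%type.

Definition px (p : pt) : R := fst (fst p).
Definition py (p : pt) : R := snd (fst p).
Definition pz (p : pt) : R := snd p.

Definition dot (u v : pt) : R := px u * px v + py u * py v + pz u * pz v.
Definition vsub (u v : pt) : pt := (px u - px v, py u - py v, pz u - pz v).
Definition vadd (u v : pt) : pt := (px u + px v, py u + py v, pz u + pz v).
Definition vscale (c : R) (u : pt) : pt := (c * px u, c * py u, c * pz u).
Definition cross (u v : pt) : pt :=
  (py u * pz v - pz u * py v, pz u * px v - px u * pz v, px u * py v - py u * px v).

Definition in_model (g : geom) (x : pt) : Prop :=
  match g with
  | Hyperbolic => dot x x < 1
  | _ => True
  end.

(** Rotation by angle 2*pi*k/q about the z-axis (an isometry in all three models). *)
Definition rot (q k : nat) (x : pt) : pt :=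
  let phi := 2 * PI * INR k / INR q in
  (px x * cos phi - py x * sin phi, px x * sin phi + py x * cos phi, pz x).

Definition basev (q : nat) (v0 : pt) (k : nat) : pt := rot q k v0.

Definition pyr_vertex (q : nat) (v0 a : pt) (i : nat) : pt :=
  if (i <? q)%nat then basev q v0 i else a.

Fixpoint sumR (m : nat) (f : nat -> R) : R :=
  match m with O => 0 | S m' => sumR m' f + f m' end.

Fixpoint sumV (m : nat) (f : nat -> pt) : pt :=
  match m with O => (0, 0, 0) | S m' => vadd (sumV m' f) (f m') end.

Definition conv (m : nat) (p : nat -> pt) (x : pt) : Prop :=
  exists w : nat -> R,
    (forall i, (i < m)%nat -> 0 <= w i) /\
    sumR m w = 1 /\
    x = sumV m (fun i => vscale (w i) (p i)).

(** In H^3 the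
    apex may be ideal or hyperideal, and then the sides are infinite triangles. *)
Definition pyramid_set (g : geom) (q : nat) (v0 a : pt) (x : pt) : Prop :=
  in_model g x /\ conv (S q) (pyr_vertex q v0 a) x.

(** Centroid of the vertices (an interior point used to orient normals). *)
Definition centroid (q : nat) (v0 a : pt) : pt :=
  vscale (/ INR (S q)) (sumV (S q) (pyr_vertex q v0 a)).

Definition side_normal (q : nat) (v0 a : pt) (k : nat) : pt * R :=
  let nv := cross (vsub (basev q v0 k) a) (vsub (basev q v0 (S k)) a) in
  let d := dot nv a in
  let s := if Rlt_dec (dot nv (centroid q v0 a)) d then 1 else -1 in
  (vscale s nv, - s * d).

Definition formB (g : geom) (N1 N2 : pt * R) : R :=
  dot (fst N1) (fst N2) + curv g * snd N1 * snd N2.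

Definition dihedral (g : geom) (N1 N2 : pt * R) : R :=
  acos (- formB g N1 N2 / sqrt (formB g N1 N1 * formB g N2 N2)).

Definition is_PY (g : geom) (q n : nat) (v0 a : pt) : Prop :=
  (* the base is a genuine regular q-gon of the space *)
  in_model g v0 /\ (px v0 <> 0 \/ py v0 <> 0) /\
  (* the apex is not in the base plane; it is a point of the space,
     except in H^3 where it may be ideal or hyperideal *)
  pz a <> pz v0 /\
  (g <> Hyperbolic -> in_model g a) /\
  (forall x, pyramid_set g q v0 a x <-> pyramid_set g q v0 a (rot q 1 x)) /\
  (forall k, (k < q)%nat ->
     dihedral g (side_normal q v0 a k) (side_normal q v0 a (S k)) = 2 * PI / INR n).

From Stdlib Require Import Reals Lra Lia.
Open Scope R_scope.

(** In the Klein model of H^3 put the base vertices on the circle of radius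
    r < 1 in the plane z = 0 and the apex at (0,0,h), allowing h > 1 (a
    hyperideal apex).  With K = cos^2 (pi/q), the outward normals of adjacent
    sides give the cosine of their dihedral angle as
      - (h^2 (2K - 1) + r^2 K (1 - h^2)) / (h^2 + r^2 K (1 - h^2)).
    Prescribing the value gamma = cos (2 pi / n) is a linear equation in h^2,
    with a positive solution as soon as r^2 K (1 + gamma) > 2K - 1 + gamma; such
    an r < 1 exists since K (1 + gamma) - (2K - 1 + gamma) = (1 - K)(1 - gamma) > 0.
    The rotation permutes the base vertices cyclically and fixes the apex, so
    it preserves the pyramid, and it fixes the centroid, which therefore lies on
    the axis; this orients the side normals. *)

Lemma pt_eq (x y : pt) : px x = px y -> py x = py y -> pz x = pz y -> x = y.
Proof.
  destruct x as [[x1 x2] x3], y as [[y1 y2] y3]; unfold px, py, pz; cbn.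
  intros -> -> ->; reflexivity.
Qed.

Ltac pt_ring :=
  apply pt_eq; unfold rot, vadd, vscale, px, py, pz; cbn [fst snd]; ring.

Lemma sin_cos_sq x : sin x * sin x + cos x * cos x = 1.
Proof. exact (sin2_cos2 x). Qed.

Lemma sin_cos_PI_div_pos m : (3 <= m)%nat -> 0 < sin (PI / INR m) /\ 0 < cos (PI / INR m).
Proof.
  intros Hm; apply le_INR in Hm; simpl INR in Hm.
  pose proof PI_RGT_0.
  assert (0 < PI / INR m < PI / 2).
  { split; [apply Rdiv_lt_0_compat; lra|].
    apply Rmult_lt_reg_r with (2 * INR m); [lra|].
    unfold Rdiv; field_simplify; nra. }
  split; [apply sin_gt_0 | apply cos_gt_0]; lra.
Qed.

Lemma cos_2PI_div_bounds m : (3 <= m)%nat -> -1 < cos (2 * PI / INR m) < 1.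
Proof.
  intros Hm; destruct (sin_cos_PI_div_pos m Hm) as [Hs Hc].
  replace (2 * PI / INR m) with (2 * (PI / INR m)) by (unfold Rdiv; ring).
  split; [rewrite cos_2a_cos | rewrite cos_2a_sin]; nra.
Qed.

Lemma sumR_ext m f g : (forall i, (i < m)%nat -> f i = g i) -> sumR m f = sumR m g.
Proof.
  induction m as [|m IH]; intros Hfg; cbn [sumR]; [reflexivity|].
  rewrite IH by (intros; apply Hfg; lia).
  rewrite Hfg by lia; reflexivity.
Qed.

Lemma sumV_ext m f g : (forall i, (i < m)%nat -> f i = g i) -> sumV m f = sumV m g.
Proof.
  induction m as [|m IH]; intros Hfg; cbn [sumV]; [reflexivity|].
  rewrite IH by (intros; apply Hfg; lia).
  rewrite Hfg by lia; reflexivity.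
Qed.

Lemma sumR_shift m f : sumR (S m) f = f O + sumR m (fun i => f (S i)).
Proof.
  induction m as [|m IH]; cbn [sumR] in *; [ring|].
  rewrite IH; ring.
Qed.

Lemma sumR_const m c : sumR m (fun _ => c) = INR m * c.
Proof.
  induction m as [|m IH]; cbn [sumR]; [simpl; ring|].
  rewrite IH, S_INR; ring.
Qed.

Lemma px_sumV m f : px (sumV m f) = sumR m (fun i => px (f i)).
Proof. induction m as [|m IH]; cbn [sumV sumR]; [reflexivity|]. rewrite <- IH; reflexivity. Qed.

Lemma py_sumV m f : py (sumV m f) = sumR m (fun i => py (f i)).
Proof. induction m as [|m IH]; cbn [sumV sumR]; [reflexivity|]. rewrite <- IH; reflexivity. Qed.

Lemma pz_sumV m f : pz (sumV m f) = sumR m (fun i => pz (f i)).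
Proof. induction m as [|m IH]; cbn [sumV sumR]; [reflexivity|]. rewrite <- IH; reflexivity. Qed.

Definition cycle_succ (m i : nat) : nat :=
  if (S i <? m)%nat then S i else if (S i =? m)%nat then O else i.

Definition cycle_pred (m j : nat) : nat :=
  if (j =? O)%nat then pred m else if (j <? m)%nat then pred j else j.

Lemma cycle_pred_succ m i : (0 < m)%nat -> cycle_pred m (cycle_succ m i) = i.
Proof.
  intros Hm; unfold cycle_succ, cycle_pred.
  destruct (Nat.ltb_spec (S i) m); [cbn [Nat.eqb]; destruct (Nat.ltb_spec (S i) m); lia|].
  destruct (Nat.eqb_spec (S i) m); [cbn [Nat.eqb]; lia|].
  destruct (Nat.eqb_spec i 0); [lia|].
  destruct (Nat.ltb_spec i m); lia.
Qed.

Lemma cycle_pred_lt m j : (j < S m)%nat -> (cycle_pred m j < S m)%nat.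
Proof.
  intros Hj; unfold cycle_pred.
  destruct (Nat.eqb_spec j 0); [lia|].
  destruct (Nat.ltb_spec j m); lia.
Qed.

Lemma sumR_cycle m F : sumR (S m) (fun i => F (cycle_succ m i)) = sumR (S m) F.
Proof.
  assert (Hfix : cycle_succ m m = m).
  { unfold cycle_succ.
    destruct (Nat.ltb_spec (S m) m); [lia|].
    destruct (Nat.eqb_spec (S m) m); [lia|reflexivity]. }
  cbn [sumR]; rewrite Hfix; f_equal.
  destruct m as [|m]; [reflexivity|].
  rewrite (sumR_shift m F); cbn [sumR].
  assert (Hlast : cycle_succ (S m) m = O).
  { unfold cycle_succ.
    destruct (Nat.ltb_spec (S m) (S m)); [lia|].
    rewrite Nat.eqb_refl; reflexivity. }
  rewrite Hlast, (sumR_ext m _ (fun i => F (S i))); [ring|].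
  intros i Hi; unfold cycle_succ.
  destruct (Nat.ltb_spec (S i) (S m)); [reflexivity|lia].
Qed.

Lemma sumV_cycle m F : sumV (S m) (fun i => F (cycle_succ m i)) = sumV (S m) F.
Proof.
  apply pt_eq; rewrite ?px_sumV, ?py_sumV, ?pz_sumV;
    exact (sumR_cycle m (fun i => _ (F i))).
Qed.

Lemma conv_cycle q p x :
  (0 < q)%nat -> conv (S q) (fun i => p (cycle_succ q i)) x -> conv (S q) p x.
Proof.
  intros Hq (w & Hw & Hsum & ->).
  exists (fun j => w (cycle_pred q j)); split; [|split].
  - intros j Hj; apply Hw, cycle_pred_lt, Hj.
  - rewrite <- (sumR_cycle q (fun j => w (cycle_pred q j))), <- Hsum.
    apply sumR_ext; intros i _; rewrite cycle_pred_succ by exact Hq; reflexivity.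
  - rewrite <- (sumV_cycle q (fun j => vscale (w (cycle_pred q j)) (p j))).
    apply sumV_ext; intros i _; rewrite cycle_pred_succ by exact Hq; reflexivity.
Qed.

Lemma rot_add q j k x : rot q j (rot q k x) = rot q (j + k) x.
Proof.
  unfold rot at 3; rewrite plus_INR.
  replace (2 * PI * (INR j + INR k) / INR q)
    with (2 * PI * INR j / INR q + 2 * PI * INR k / INR q) by (unfold Rdiv; ring).
  rewrite cos_plus, sin_plus; pt_ring.
Qed.

Lemma rot_0 q x : rot q 0 x = x.
Proof.
  unfold rot; replace (2 * PI * INR 0 / INR q) with 0 by (simpl; unfold Rdiv; ring).
  rewrite cos_0, sin_0; pt_ring.
Qed.

Lemma rot_full q x : (0 < q)%nat -> rot q q x = x.
Proof.
  intros Hq; apply lt_0_INR in Hq.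
  unfold rot; replace (2 * PI * INR q / INR q) with (2 * PI) by (field; lra).
  rewrite cos_2PI, sin_2PI; pt_ring.
Qed.

Lemma rot_vscale q k c x : rot q k (vscale c x) = vscale c (rot q k x).
Proof. pt_ring. Qed.

Lemma rot_sumV q k m f : rot q k (sumV m f) = sumV m (fun i => rot q k (f i)).
Proof.
  induction m as [|m IH]; cbn [sumV].
  - pt_ring.
  - rewrite <- IH; pt_ring.
Qed.

Lemma rot_dot q k x : dot (rot q k x) (rot q k x) = dot x x.
Proof.
  unfold dot, rot, px, py, pz; cbn [fst snd].
  set (t := 2 * PI * INR k / INR q).
  transitivity ((fst (fst x) * fst (fst x) + snd (fst x) * snd (fst x))
                * (sin t * sin t + cos t * cos t) + snd x * snd x); [ring|].
  rewrite sin_cos_sq; ring.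
Qed.

Lemma in_model_rot g q k x : in_model g (rot q k x) <-> in_model g x.
Proof. destruct g; cbn [in_model]; rewrite ?rot_dot; tauto. Qed.

Lemma rot_on_axis q k a : px a = 0 -> py a = 0 -> rot q k a = a.
Proof.
  intros Ha1 Ha2; apply pt_eq; unfold rot; cbn [px py pz fst snd];
    rewrite ?Ha1, ?Ha2; unfold px, py, pz; ring.
Qed.

Lemma rot_fixed_on_axis q x :
  cos (2 * PI / INR q) < 1 -> rot q 1 x = x -> px x = 0 /\ py x = 0.
Proof.
  destruct x as [[x1 x2] x3]; unfold rot, px, py, pz; cbn [fst snd].
  replace (2 * PI * INR 1 / INR q) with (2 * PI / INR q) by (simpl INR; unfold Rdiv; ring).
  set (c := cos (2 * PI / INR q)); set (s := sin (2 * PI / INR q)).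
  intros Hc Hx; injection Hx as Ex Ey.
  assert (Hn : (x1 * x1 + x2 * x2) * (1 - c) = 0).
  { transitivity (x1 * (x1 - (x1 * c - x2 * s)) + x2 * (x2 - (x1 * s + x2 * c))); [ring|].
    rewrite Ex, Ey; ring. }
  apply Rmult_integral in Hn as [Hn|Hn]; [split; nra | lra].
Qed.

Section AxialPyramid.

Variables (q : nat) (v0 a : pt).
Hypothesis q_pos : (0 < q)%nat.
Hypotheses (apex_x : px a = 0) (apex_y : py a = 0).

Lemma rot_pyr_vertex i :
  rot q 1 (pyr_vertex q v0 a i) = pyr_vertex q v0 a (cycle_succ q i).
Proof.
  unfold pyr_vertex, cycle_succ, basev.
  destruct (Nat.ltb_spec (S i) q).
  - destruct (Nat.ltb_spec i q); [|lia].
    destruct (Nat.ltb_spec (S i) q); [|lia].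
    apply rot_add.
  - destruct (Nat.eqb_spec (S i) q) as [Hi|Hi].
    + destruct (Nat.ltb_spec i q); [|lia].
      destruct (Nat.ltb_spec 0 q); [|lia].
      rewrite rot_add, rot_0; cbn [Nat.add]; rewrite Hi; apply rot_full, q_pos.
    + destruct (Nat.ltb_spec i q); [lia|].
      apply rot_on_axis; assumption.
Qed.

Lemma pyramid_set_rot g x :
  pyramid_set g q v0 a x -> pyramid_set g q v0 a (rot q 1 x).
Proof.
  intros [Hx (w & Hw & Hsum & ->)]; split.
  - apply in_model_rot, Hx.
  - apply conv_cycle; [exact q_pos|].
    exists w; split; [exact Hw|split; [exact Hsum|]].
    rewrite rot_sumV; apply sumV_ext; intros i _.
    rewrite rot_vscale, rot_pyr_vertex; reflexivity.
Qed.

Lemma pyramid_set_rot_iff g x :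
  pyramid_set g q v0 a x <-> pyramid_set g q v0 a (rot q 1 x).
Proof.
  split; [apply pyramid_set_rot|].
  assert (Hiter : forall j y, pyramid_set g q v0 a y -> pyramid_set g q v0 a (rot q j y)).
  { induction j as [|j IH]; intros y Hy.
    - rewrite rot_0; exact Hy.
    - replace (S j) with (1 + j)%nat by reflexivity.
      rewrite <- rot_add; apply pyramid_set_rot, IH, Hy. }
  intros Hx; apply (Hiter (pred q)) in Hx.
  rewrite rot_add, Nat.add_1_r, Nat.succ_pred_pos, rot_full in Hx by exact q_pos.
  exact Hx.
Qed.

Lemma rot_centroid : rot q 1 (centroid q v0 a) = centroid q v0 a.
Proof.
  unfold centroid; rewrite rot_vscale, rot_sumV; f_equal.
  rewrite <- (sumV_cycle q (pyr_vertex q v0 a)).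
  apply sumV_ext; intros i _; apply rot_pyr_vertex.
Qed.

Lemma pz_centroid : pz (centroid q v0 a) = (INR q * pz v0 + pz a) / INR (S q).
Proof.
  unfold centroid; cbn [vscale pz snd]; fold (pz (sumV (S q) (pyr_vertex q v0 a))).
  rewrite pz_sumV; cbn [sumR].
  rewrite (sumR_ext q _ (fun _ => pz v0)), sumR_const.
  - unfold pyr_vertex; rewrite Nat.ltb_irrefl; unfold Rdiv; ring.
  - intros i Hi; unfold pyr_vertex, basev.
    destruct (Nat.ltb_spec i q); [reflexivity|lia].
Qed.

End AxialPyramid.

Definition cone_normal (m z0 h t : R) : pt * R :=
  ((m * cos t, m * sin t, z0), - (z0 * h)).

Lemma formB_cone_normal m z0 h t u :
  formB Hyperbolic (cone_normal m z0 h t) (cone_normal m z0 h (t + u))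
  = m * m * cos u + z0 * z0 * (1 - h * h).
Proof.
  unfold formB, curv, dot, cone_normal, px, py, pz; cbn [fst snd].
  rewrite cos_plus, sin_plus.
  transitivity (m * m * cos u * (sin t * sin t + cos t * cos t) + z0 * z0 * (1 - h * h));
    [ring|].
  rewrite sin_cos_sq; ring.
Qed.

Lemma dihedral_cone_normal m z0 h t u :
  0 < m * m + z0 * z0 * (1 - h * h) ->
  dihedral Hyperbolic (cone_normal m z0 h t) (cone_normal m z0 h (t + u))
  = acos (- (m * m * cos u + z0 * z0 * (1 - h * h)) / (m * m + z0 * z0 * (1 - h * h))).
Proof.
  intros Hpos.
  assert (Hself : forall s, formB Hyperbolic (cone_normal m z0 h s) (cone_normal m z0 h s)
                            = m * m + z0 * z0 * (1 - h * h)).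
  { intros s; rewrite <- (Rplus_0_r s) at 2; rewrite formB_cone_normal, cos_0; ring. }
  unfold dihedral; rewrite formB_cone_normal, !Hself, sqrt_square by lra.
  reflexivity.
Qed.

Lemma basev_circle q r k :
  basev q (r, 0, 0) k = (r * cos (2 * PI * INR k / INR q), r * sin (2 * PI * INR k / INR q), 0).
Proof. unfold basev; pt_ring. Qed.

Lemma cross_chord r h psi b :
  cross (vsub (r * cos (psi - b), r * sin (psi - b), 0) (0, 0, h))
        (vsub (r * cos (psi + b), r * sin (psi + b), 0) (0, 0, h))
  = (2 * h * r * sin b * cos psi, 2 * h * r * sin b * sin psi, 2 * r * r * sin b * cos b).
Proof.
  apply pt_eq; unfold cross, vsub, px, py, pz; cbn [fst snd];
    rewrite ?cos_plus, ?cos_minus, ?sin_plus, ?sin_minus; try ring.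
  transitivity (2 * r * r * sin b * cos b * (sin psi * sin psi + cos psi * cos psi)); [ring|].
  rewrite sin_cos_sq; ring.
Qed.

Lemma side_normal_circle q r h k :
  (3 <= q)%nat -> 0 < r -> 0 < h ->
  let b := PI / INR q in
  side_normal q (r, 0, 0) (0, 0, h) k
  = cone_normal (2 * h * r * sin b) (2 * r * r * sin b * cos b) h (2 * b * INR k + b).
Proof.
  intros Hq Hr Hh b.
  pose proof (le_INR _ _ Hq) as Iq; simpl INR in Iq.
  destruct (sin_cos_PI_div_pos q Hq) as [Hs Hc]; fold b in Hs, Hc.
  set (psi := 2 * b * INR k + b).
  assert (E1 : basev q (r, 0, 0) k = (r * cos (psi - b), r * sin (psi - b), 0)).
  { rewrite basev_circle.
    replace (2 * PI * INR k / INR q) with (psi - b) by (unfold psi, b; field; lra).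
    reflexivity. }
  assert (E2 : basev q (r, 0, 0) (S k) = (r * cos (psi + b), r * sin (psi + b), 0)).
  { rewrite basev_circle.
    replace (2 * PI * INR (S k) / INR q) with (psi + b)
      by (unfold psi, b; rewrite S_INR; field; lra).
    reflexivity. }
  set (C := centroid q (r, 0, 0) (0, 0, h)).
  assert (HC : px C = 0 /\ py C = 0).
  { apply (rot_fixed_on_axis q); [apply cos_2PI_div_bounds, Hq|].
    apply rot_centroid; [lia | reflexivity | reflexivity]. }
  assert (Cz : pz C = h / INR (S q)).
  { unfold C; rewrite pz_centroid by lia; unfold pz; cbn [snd]; unfold Rdiv; ring. }
  unfold side_normal; rewrite E1, E2, cross_chord.
  destruct (Rlt_dec _ _) as [Hin|Hin].
  - unfold cone_normal; f_equal; [pt_ring|].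
    unfold dot, px, py, pz; cbn [fst snd]; ring.
  - exfalso; apply Hin.
    unfold dot; fold C; destruct HC as [-> ->]; rewrite Cz; cbn [px py pz fst snd].
    assert (Hfrac : h / INR (S q) < h).
    { rewrite S_INR; apply Rmult_lt_reg_r with (INR q + 1); [lra|].
      unfold Rdiv; rewrite Rmult_assoc, Rinv_l by lra; nra. }
    assert (0 < 2 * r * r * sin b * cos b) by (repeat apply Rmult_lt_0_compat; lra).
    nra.
Qed.

Definition adjacent_sides_cos (q : nat) (r h : R) : R :=
  let K := cos (PI / INR q) * cos (PI / INR q) in
  - (h * h * (2 * K - 1) + r * r * K * (1 - h * h)) / (h * h + r * r * K * (1 - h * h)).

Lemma adjacent_sides_denom_pos q r h :
  (3 <= q)%nat -> 0 < r < 1 -> 0 < h ->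
  let K := cos (PI / INR q) * cos (PI / INR q) in
  0 < h * h + r * r * K * (1 - h * h).
Proof.
  intros Hq Hr Hh K.
  destruct (sin_cos_PI_div_pos q Hq) as [Hs Hc].
  pose proof (sin_cos_sq (PI / INR q)) as Hsc.
  assert (0 < K <= 1) by (unfold K; split; nra).
  assert (0 < r * r < 1) by (split; nra).
  assert (0 < r * r * K < 1) by (split; nra).
  nra.
Qed.

Lemma dihedral_adjacent_sides q r h k :
  (3 <= q)%nat -> 0 < r < 1 -> 0 < h ->
  dihedral Hyperbolic (side_normal q (r, 0, 0) (0, 0, h) k)
                      (side_normal q (r, 0, 0) (0, 0, h) (S k))
  = acos (adjacent_sides_cos q r h).
Proof.
  intros Hq Hr Hh.
  rewrite !side_normal_circle by (lia || lra).
  pose proof (adjacent_sides_denom_pos q r h Hq Hr Hh) as HD.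
  destruct (sin_cos_PI_div_pos q Hq) as [Hs Hc].
  unfold adjacent_sides_cos in *; set (b := PI / INR q) in *.
  rewrite S_INR.
  replace (2 * b * (INR k + 1) + b) with ((2 * b * INR k + b) + 2 * b) by ring.
  assert (Hpos : 0 < 2 * h * r * sin b * (2 * h * r * sin b)
                   + 2 * r * r * sin b * cos b * (2 * r * r * sin b * cos b) * (1 - h * h)).
  { replace (2 * h * r * sin b * (2 * h * r * sin b)
             + 2 * r * r * sin b * cos b * (2 * r * r * sin b * cos b) * (1 - h * h))
      with (4 * (r * r) * (sin b * sin b) * (h * h + r * r * (cos b * cos b) * (1 - h * h)))
      by ring.
    repeat apply Rmult_lt_0_compat; nra. }
  rewrite dihedral_cone_normal, cos_2a_cos by exact Hpos.
  f_equal; field; lra.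
Qed.

Lemma adjacent_sides_cos_surj q gamma :
  (3 <= q)%nat -> -1 < gamma < 1 ->
  exists r h, 0 < r < 1 /\ 0 < h /\ adjacent_sides_cos q r h = gamma.
Proof.
  intros Hq Hg.
  destruct (sin_cos_PI_div_pos q Hq) as [Hs Hc].
  pose proof (sin_cos_sq (PI / INR q)) as Hsc.
  set (K := cos (PI / INR q) * cos (PI / INR q)).
  assert (HK : 0 < K < 1) by (unfold K; split; nra).
  set (A := K * (1 + gamma)); set (s := 2 * K - 1 + gamma).
  assert (HA : 0 < A) by (unfold A; nra).
  assert (HsA : s < A) by (unfold A, s; nra).
  set (rho := (1 + Rmax 0 (s / A)) / 2).
  assert (Hrho : 0 < rho < 1 /\ s < rho * A).
  { pose proof (Rmax_l 0 (s / A)); pose proof (Rmax_r 0 (s / A)).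
    assert (s / A < 1) by (apply Rmult_lt_reg_r with A; [lra|]; field_simplify; lra).
    assert (Rmax 0 (s / A) < 1) by (apply Rmax_lub_lt; lra).
    assert (s = s / A * A) by (field; lra).
    unfold rho; repeat split; nra. }
  set (H := rho * A / (rho * A - s)).
  assert (HH : 0 < H) by (apply Rdiv_lt_0_compat; nra).
  assert (Hbal : H * s + rho * A * (1 - H) = 0) by (unfold H; field; lra).
  exists (sqrt rho), (sqrt H).
  assert (Hr : 0 < sqrt rho < 1).
  { split; [apply sqrt_lt_R0; lra|].
    rewrite <- sqrt_1; apply sqrt_lt_1; lra. }
  assert (Hh : 0 < sqrt H) by (apply sqrt_lt_R0, HH).
  split; [exact Hr|split; [exact Hh|]].
  pose proof (adjacent_sides_denom_pos q _ _ Hq Hr Hh) as HD.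
  unfold adjacent_sides_cos in *; fold K in HD |- *.
  rewrite !sqrt_sqrt in * by lra.
  replace (- (H * (2 * K - 1) + rho * K * (1 - H)))
    with (gamma * (H + rho * K * (1 - H))) by (unfold A, s in Hbal; lra).
  field; lra.
Qed.

Lemma klein_pyramid_is_PY q n r h :
  (3 <= q)%nat -> (2 <= n)%nat -> 0 < r < 1 -> 0 < h ->
  adjacent_sides_cos q r h = cos (2 * PI / INR n) ->
  is_PY Hyperbolic q n (r, 0, 0) (0, 0, h).
Proof.
  intros Hq Hn Hr Hh Hcos.
  unfold is_PY, in_model, dot, px, py, pz; cbn [fst snd].
  refine (conj _ (conj _ (conj _ (conj _ (conj _ _))))).
  - nra.
  - left; lra.
  - lra.
  - intros Hg; contradiction (Hg eq_refl).
  - intros x; apply pyramid_set_rot_iff; [lia | reflexivity | reflexivity].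
  - intros k _; rewrite dihedral_adjacent_sides, Hcos by (lia || lra).
    apply le_INR in Hn; simpl INR in Hn; pose proof PI_RGT_0.
    apply acos_cos; split.
    + apply Rlt_le, Rdiv_lt_0_compat; lra.
    + apply Rmult_le_reg_r with (INR n); [lra|].
      unfold Rdiv; rewrite Rmult_assoc, Rinv_l by lra; nra.
Qed.

Theorem mainTheorem10 (q n : nat) (hq : (3 <= q)%nat) (hn : (3 <= n)%nat) :
  exists (g : geom) (v0 a : pt), is_PY g q n v0 a.
Proof.
  destruct (adjacent_sides_cos_surj q (cos (2 * PI / INR n)) hq (cos_2PI_div_bounds n hn))
    as (r & h & Hr & Hh & Hcos).
  exists Hyperbolic, (r, 0, 0), (0, 0, h).
  apply klein_pyramid_is_PY; [exact hq | lia | exact Hr | exact Hh | exact Hcos].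
Qed.
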